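(* Let $(\mathcal{C},P)$ be a doctrine with comprehension such that for every $\alpha$ the functor $\lfloor\alpha\rfloor^*$ has a right adjoint $\Pi_{\lfloor\alpha\rfloor}$. If the operation $\alpha\rightarrow\beta:=\Pi_{\lfloor\alpha\rfloor}\lfloor\alpha\rfloor^*\beta$ makes $(\mathcal{C},P)$ implicational (in particular, if it satisfies condition (iv)(c) below), then the comprehension is full. Consequently, for a $\Pi$-doctrine with comprehension which is a restricted $\Pi(\mathcal{C}_P)$-doctrine, this operation provides an implicational structure if and only if comprehension is full.
   Context: A doctrine is a pair $(\mathcal{C},P)$, $\mathcal{C}$ a category with finite products, $P:\mathcal{C}^{op}\to\mathbf{Pos}$ a functor, $f^*=P(f)$. A right adjoint $\Pi_u$ of $u^*$ satisfies $u^*\Pi_u\alpha\le\alpha$, $\beta\le\Pi_uu^*\beta$. Comprehension: every $P(A)$ has a top $\top_A$ and for each $\alpha\in P(A)$ there is $\lfloor\alpha\rfloor:\{\alpha\}\to A$ with $\lfloor\alpha\rfloor^*\alpha=\top_{\{\alpha\}}$ such that every $f:Y\to A$ with $f^*\alpha=\top_Y$ factors uniquely through $\lfloor\alpha\rfloor$; it is full if whenever $\lfloor\alpha\rfloor$ factors through $\lfloor\beta\rfloor$ then $\alpha\le\beta$. $\mathcal{C}_P$ is the class of arrows $\lfloor\alpha\rfloor$. Beck–Chevalley for right adjoints with respect to a pullback-stable class $\mathcal{A}$: for every pullback square $h\circ g=f\circ k$ with $f\in\mathcal{A}$, $h^*\Pi_f\gamma=\Pi_gk^*\gamma$; restricted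 version: only for $\gamma=f^*\xi$. A $\Pi$-doctrine: right adjoints along all product projections satisfying Beck–Chevalley with respect to product projections. Implicational: there is $\rightarrow$ on each $P(A)$ with (ii) $f^*(\alpha\rightarrow\beta)=f^*\alpha\rightarrow f^*\beta$; (iii) $\Pi_{\pi_A}(\pi_A^*\alpha\rightarrow\beta)=\alpha\rightarrow\Pi_{\pi_A}\beta$ for projections $\pi_A:X\times A\to A$; (iv) (a) $\phi\le\psi\rightarrow\phi$; (b) $\gamma\rightarrow(\phi\rightarrow\psi)\le(\gamma\rightarrow\phi)\rightarrow(\gamma\rightarrow\psi)$; (c) if $\gamma\le\phi\rightarrow\psi$ and $\gamma\le\phi$ then $\gamma\le\psi$; (d) if $\phi\le\psi$ then $\gamma\le\phi\rightarrow\psi$. *)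

Set Implicit Arguments.
Unset Strict Implicit.

Record CartCat := {
  Obj : Type;
  Hom : Obj -> Obj -> Type;
  idm : forall A, Hom A A;
  comp : forall A B C, Hom B C -> Hom A B -> Hom A C;   (* comp g f = g o f *)
  comp_idl : forall A B (f : Hom A B), comp (idm B) f = f;
  comp_idr : forall A B (f : Hom A B), comp f (idm A) = f;
  comp_assoc : forall A B C D (h : Hom C D) (g : Hom B C) (f : Hom A B),
      comp h (comp g f) = comp (comp h g) f;
  one : Obj;
  bang : forall A, Hom A one;
  bang_uniq : forall A (f : Hom A one), f = bang A;
  prod : Obj -> Obj -> Obj;
  p1 : forall A B, Hom (prod A B) A;
  p2 : forall A B, Hom (prod A B) B;
  pair : forall X A B, Hom X A -> Hom X B -> Hom X (prod A B);
  p1_pair : forall X A B (f : Hom X A) (g : Hom X B), comp (p1 A B) (pair f g) = f;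
  p2_pair : forall X A B (f : Hom X A) (g : Hom X B), comp (p2 A B) (pair f g) = g;
  pair_uniq : forall X A B (h : Hom X (prod A B)),
      h = pair (comp (p1 A B) h) (comp (p2 A B) h)
}.
Arguments idm {c} A.
Arguments comp {c A B C} _ _.
Arguments p1 {c} A B.
Arguments p2 {c} A B.
Arguments pair {c X A B} _ _.

Definition is_iso (C : CartCat) (A B : Obj C) (i : Hom A B) : Prop :=
  exists j : Hom B A, comp j i = idm A /\ comp i j = idm B.

(* pullback square  h o g = f o k :
       D --k--> B
       |g       |f
       C --h--> A                                            *)
Definition is_pullback (C : CartCat) (A B Cc D : Obj C)
  (f : Hom B A) (h : Hom Cc A) (g : Hom D Cc) (k : Hom D B) : Prop :=
  comp h g = comp f k /\
  forall E (x : Hom E Cc) (y : Hom E B), comp h x = comp f y ->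
    exists! z : Hom E D, comp g z = x /\ comp k z = y.

(* product projections pi_A : X x A -> A (up to isomorphism of the domain,
   so that the class is pullback-stable) *)
Definition isProj (C : CartCat) (B A : Obj C) (u : Hom B A) : Prop :=
  exists X (i : Hom B (prod X A)), is_iso i /\ comp (p2 X A) i = u.

Record Doctrine (C : CartCat) := {
  Pr : Obj C -> Type;
  le : forall A, Pr A -> Pr A -> Prop;
  le_refl : forall A (a : Pr A), le a a;
  le_trans : forall A (a b c : Pr A), le a b -> le b c -> le a c;
  le_antisym : forall A (a b : Pr A), le a b -> le b a -> a = b;
  rx : forall A B, Hom B A -> Pr A -> Pr B;
  rx_mono : forall A B (f : Hom B A) a b, le a b -> le (rx f a) (rx f b);
  rx_id : forall A (a : Pr A), rx (idm A) a = a;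
  rx_comp : forall A B Cc (f : Hom A B) (g : Hom B Cc) (a : Pr Cc),
      rx (comp g f) a = rx f (rx g a)
}.
Arguments Pr {C} d _.
Arguments le {C d A} _ _.
Arguments rx {C d A B} _ _.

Record Comprehension (C : CartCat) (P : Doctrine C) := {
  top : forall A, Pr P A;
  top_max : forall A (a : Pr P A), le a (top A);
  top_stable : forall A B (f : Hom B A), rx f (top A) = top B;
  cObj : forall A, Pr P A -> Obj C;
  cmp : forall A (a : Pr P A), Hom (cObj a) A;
  cmp_top : forall A (a : Pr P A), rx (cmp a) a = top (cObj a);
  cmp_univ : forall A (a : Pr P A) Y (f : Hom Y A), rx f a = top Y ->
      exists! g : Hom Y (cObj a), f = comp (cmp a) g
}.
Arguments top {C P} c A.
Arguments cObj {C P} c {A} _.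
Arguments cmp {C P} c {A} _.

Definition full_comprehension (C : CartCat) (P : Doctrine C) (K : Comprehension P) : Prop :=
  forall A (a b : Pr P A) (g : Hom (cObj K a) (cObj K b)),
    cmp K a = comp (cmp K b) g -> le a b.

Definition isCP (C : CartCat) (P : Doctrine C) (K : Comprehension P)
  (B A : Obj C) (u : Hom B A) : Prop :=
  exists (a : Pr P A) (i : Hom B (cObj K a)), is_iso i /\ comp (cmp K a) i = u.

(* Pi is a (total) assignment of a candidate right adjoint to every arrow;
   the relevant hypotheses require it to be a right adjoint on a class. *)
Definition PiOp (C : CartCat) (P : Doctrine C) :=
  forall A B, Hom B A -> Pr P B -> Pr P A.

Definition is_right_adj (C : CartCat) (P : Doctrine C) (A B : Obj C)
  (u : Hom B A) (R : Pr P B -> Pr P A) : Prop :=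
  (forall a b, le a b -> le (R a) (R b)) /\
  (forall a, le (rx u (R a)) a) /\
  (forall b, le b (R (rx u b))).

Definition BC (C : CartCat) (P : Doctrine C) (Pi : PiOp P)
  (Acl : forall B A, Hom B A -> Prop) : Prop :=
  forall A B Cc D (f : Hom B A) (h : Hom Cc A) (g : Hom D Cc) (k : Hom D B),
    Acl B A f -> is_pullback f h g k ->
    forall gam : Pr P B, rx h (Pi _ _ f gam) = Pi _ _ g (rx k gam).

Definition BC_restricted (C : CartCat) (P : Doctrine C) (Pi : PiOp P)
  (Acl : forall B A, Hom B A -> Prop) : Prop :=
  forall A B Cc D (f : Hom B A) (h : Hom Cc A) (g : Hom D Cc) (k : Hom D B),
    Acl B A f -> is_pullback f h g k ->
    forall xi : Pr P A, rx h (Pi _ _ f (rx f xi)) = Pi _ _ g (rx k (rx f xi)).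

Definition Pi_doctrine (C : CartCat) (P : Doctrine C) (Pi : PiOp P) : Prop :=
  (forall B A (u : Hom B A), isProj u -> is_right_adj u (Pi _ _ u)) /\
  BC Pi (@isProj C).

Definition restricted_Pi_CP_doctrine (C : CartCat) (P : Doctrine C)
  (K : Comprehension P) (Pi : PiOp P) : Prop :=
  (forall B A (u : Hom B A), isCP K u -> is_right_adj u (Pi _ _ u)) /\
  BC_restricted Pi (@isCP C P K).

Definition ImpOp (C : CartCat) (P : Doctrine C) := forall A, Pr P A -> Pr P A -> Pr P A.

Definition imp_cond_c (C : CartCat) (P : Doctrine C) (imp : ImpOp P) : Prop :=
  forall A (g f s : Pr P A), le g (imp A f s) -> le g f -> le g s.

Definition implicational (C : CartCat) (P : Doctrine C) (Pi : PiOp P) (imp : ImpOp P) : Prop :=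
  (forall A B (f : Hom B A) (a b : Pr P A), rx f (imp A a b) = imp B (rx f a) (rx f b)) /\
  (forall X A (a : Pr P A) (b : Pr P (prod X A)),
      Pi _ _ (p2 X A) (imp _ (rx (p2 X A) a) b) = imp A a (Pi _ _ (p2 X A) b)) /\
  (forall A (f s : Pr P A), le f (imp A s f)) /\
  (forall A (g f s : Pr P A),
      le (imp A g (imp A f s)) (imp A (imp A g f) (imp A g s))) /\
  imp_cond_c imp /\
  (forall A (g f s : Pr P A), le f s -> le g (imp A f s)).

Definition comp_imp (C : CartCat) (P : Doctrine C) (K : Comprehension P) (Pi : PiOp P)
  : ImpOp P :=
  fun A a b => Pi _ _ (cmp K a) (rx (cmp K a) b).

(* By adjointness, [γ ≤ α → β] iff [⌊α⌋^* γ ≤ ⌊α⌋^* β]; and [⌊α⌋^* β = ⊤] iff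
   [⌊α⌋] factors through [⌊β⌋]. Modus ponens (iv)(c) applied to [α ≤ α → β] and
   [α ≤ α] is therefore exactly fullness of comprehension, and conversely fullness
   gives (iv)(c). Given (iv)(c), restricted Beck-Chevalley along the pullback of a
   comprehension gives stability (ii) and [⊤ → β = β], hence
   [⌊α⌋^* (α → β) = ⌊α⌋^* β]; the remaining axioms follow by pulling back along
   comprehensions, and (iii) by Beck-Chevalley along product projections. *)
Set Implicit Arguments.
Unset Strict Implicit.

Lemma right_adj_le_iff (C : CartCat) (P : Doctrine C) A B (u : Hom B A)
  (R : Pr P B -> Pr P A) :
  is_right_adj u R -> forall a b, le a (R b) <-> le (rx u a) b.
Proof.
  intros [R_mono [counit unit]] a b; split; intro H.
  - eapply le_trans; [apply rx_mono; exact H | apply counit].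
  - eapply le_trans; [apply unit | apply R_mono; exact H].
Qed.

Lemma pair_comp (C : CartCat) X A B E (a : Hom X A) (b : Hom X B) (c : Hom E X) :
  comp (c:=C) (pair a b) c = pair (comp a c) (comp b c).
Proof.
  rewrite (pair_uniq (comp (pair a b) c)), !comp_assoc, p1_pair, p2_pair.
  reflexivity.
Qed.

Lemma isProj_p2 (C : CartCat) X A : @isProj C _ _ (p2 X A).
Proof.
  exists X, (idm _); split; [exists (idm _); split; apply comp_idl | apply comp_idr].
Qed.

Lemma p2_pullback (C : CartCat) X A B (h : Hom B A) :
  is_pullback (C:=C) (p2 X A) h (p2 X B) (pair (p1 X B) (comp h (p2 X B))).
Proof.
  split; [rewrite p2_pair; reflexivity |].
  intros E x y Hxy.
  exists (pair (comp (p1 X A) y) x); split.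
  - split; [apply p2_pair |].
    rewrite pair_comp, <- comp_assoc, !p1_pair, p2_pair, Hxy.
    symmetry; apply pair_uniq.
  - intros z [<- <-].
    rewrite comp_assoc, p1_pair.
    symmetry; apply pair_uniq.
Qed.

Section Comprehension.

Variables (C : CartCat) (P : Doctrine C) (K : Comprehension P).

Lemma top_le_eq A (x : Pr P A) : le (top K A) x -> x = top K A.
Proof. intro H; apply le_antisym; [apply top_max | exact H]. Qed.

Lemma rx_cmp_top_of_le A (a b : Pr P A) : le a b -> rx (cmp K a) b = top K _.
Proof.
  intro Hab; apply top_le_eq.
  rewrite <- (cmp_top K a); apply rx_mono; exact Hab.
Qed.

Lemma cmp_factorP A (a b : Pr P A) :
  (exists g, cmp K a = comp (cmp K b) g) <-> rx (cmp K a) b = top K _.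
Proof.
  split.
  - intros [g ->]; rewrite rx_comp, cmp_top, top_stable; reflexivity.
  - intro E; destruct (cmp_univ E) as [g [Hg _]]; exists g; exact Hg.
Qed.

Lemma full_comprehensionP :
  full_comprehension K <-> forall A (a b : Pr P A), rx (cmp K a) b = top K _ -> le a b.
Proof.
  split.
  - intros Hfull A a b E.
    destruct (proj2 (cmp_factorP a b) E) as [g Hg]; exact (Hfull _ _ _ g Hg).
  - intros H A a b g Hg; apply H, cmp_factorP; exists g; exact Hg.
Qed.

Lemma cmp_monic A (a : Pr P A) E (y1 y2 : Hom E (cObj K a)) :
  comp (cmp K a) y1 = comp (cmp K a) y2 -> y1 = y2.
Proof.
  intro H.
  assert (T : rx (comp (cmp K a) y1) a = top K E)
    by (rewrite rx_comp, cmp_top, top_stable; reflexivity).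
  destruct (cmp_univ T) as [g [_ Hg]].
  transitivity g; [symmetry; apply Hg; reflexivity | apply Hg; exact H].
Qed.

Lemma cmp_pullback A B (f : Hom B A) (a : Pr P A) :
  exists k, is_pullback (cmp K a) f (cmp K (rx f a)) k.
Proof.
  assert (T : rx (comp f (cmp K (rx f a))) a = top K _)
    by (rewrite rx_comp, cmp_top; reflexivity).
  destruct (cmp_univ T) as [k [Hk _]].
  exists k; split; [exact Hk |].
  intros E x y Hxy.
  assert (Tx : rx x (rx f a) = top K E)
    by (rewrite <- rx_comp, Hxy, rx_comp, cmp_top, top_stable; reflexivity).
  destruct (cmp_univ Tx) as [z [Hz Hz_uniq]].
  exists z; split.
  - split; [symmetry; exact Hz |].
    apply (@cmp_monic _ a).
    rewrite comp_assoc, <- Hk, <- comp_assoc, <- Hz; exact Hxy.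
  - intros z' [Hz' _]; apply Hz_uniq; symmetry; exact Hz'.
Qed.

Lemma isCP_cmp A (a : Pr P A) : isCP K (cmp K a).
Proof.
  exists a, (idm _); split; [exists (idm _); split; apply comp_idl | apply comp_idr].
Qed.

Section Implication.

Variable Pi : PiOp P.
Hypothesis Pi_cmp_adj : forall A (a : Pr P A), is_right_adj (cmp K a) (Pi (cmp K a)).

Local Notation imp := (comp_imp K Pi).

Lemma le_impP A (a b g : Pr P A) :
  le g (imp a b) <-> le (rx (cmp K a) g) (rx (cmp K a) b).
Proof. apply (right_adj_le_iff (Pi_cmp_adj a)). Qed.

Lemma le_imp A (a b : Pr P A) : le b (imp a b).
Proof. apply (proj2 (proj2 (Pi_cmp_adj a))). Qed.

Lemma imp_mono_r A (a b b' : Pr P A) : le b b' -> le (imp a b) (imp a b').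
Proof. intro H; apply (proj1 (Pi_cmp_adj a)), rx_mono, H. Qed.

Lemma le_imp_of_le A (a b g : Pr P A) : le a b -> le g (imp a b).
Proof. intro Hab; apply le_impP; rewrite (rx_cmp_top_of_le Hab); apply top_max. Qed.

Lemma imp_cond_c_iff_full : imp_cond_c (comp_imp K Pi) <-> full_comprehension K.
Proof.
  split.
  - intros mp; apply full_comprehensionP; intros A a b Hab.
    apply (mp A a a b); [| apply le_refl].
    apply le_impP; rewrite Hab; apply top_max.
  - intros Hfull A g f s Hgfs Hgf.
    apply (proj1 full_comprehensionP Hfull), top_le_eq.
    destruct (proj2 (cmp_factorP g f) (rx_cmp_top_of_le Hgf)) as [h Hh].
    apply le_impP, (rx_mono h) in Hgfs.
    rewrite <- !rx_comp, <- Hh, cmp_top in Hgfs; exact Hgfs.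
Qed.

Section Stability.

Hypothesis Pi_cmp_BC : BC_restricted Pi (@isCP C P K).

Lemma rx_imp A B (f : Hom B A) (a b : Pr P A) :
  rx f (imp a b) = imp (rx f a) (rx f b).
Proof.
  destruct (cmp_pullback f a) as [k Hpb]; unfold comp_imp.
  rewrite (Pi_cmp_BC (isCP_cmp a) Hpb b).
  rewrite <- rx_comp, <- (proj1 Hpb), rx_comp; reflexivity.
Qed.

Hypothesis mp : imp_cond_c (comp_imp K Pi).

Lemma imp_top_l A (b : Pr P A) : imp (top K A) b = b.
Proof.
  apply le_antisym; [| apply le_imp].
  apply (mp (le_refl _)), top_max.
Qed.

Lemma rx_cmp_imp A (a b : Pr P A) : rx (cmp K a) (imp a b) = rx (cmp K a) b.
Proof. rewrite rx_imp, cmp_top, imp_top_l; reflexivity. Qed.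

Lemma imp_imp_le_of_top A (g f s : Pr P A) :
  imp g f = top K A -> le (imp g (imp f s)) (imp g s).
Proof.
  intro Hgf; apply le_impP.
  assert (Hf : rx (cmp K g) f = top K _)
    by (rewrite <- rx_cmp_imp, Hgf, top_stable; reflexivity).
  rewrite rx_cmp_imp, rx_imp, Hf, imp_top_l; apply le_refl.
Qed.

Lemma imp_distr A (g f s : Pr P A) : le (imp g (imp f s)) (imp (imp g f) (imp g s)).
Proof.
  apply le_impP; rewrite !rx_imp.
  apply imp_imp_le_of_top; rewrite <- rx_imp; apply cmp_top.
Qed.

Lemma Pi_p2_imp (HPi : Pi_doctrine Pi) X A (a : Pr P A) (b : Pr P (prod X A)) :
  Pi (p2 X A) (imp (rx (p2 X A) a) b) = imp a (Pi (p2 X A) b).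
Proof.
  destruct HPi as [Pi_p2_adj Pi_p2_BC].
  apply le_antisym.
  - apply le_impP.
    rewrite !(Pi_p2_BC _ _ _ _ _ _ _ _ (isProj_p2 X A) (p2_pullback X (cmp K a))).
    rewrite rx_imp, <- rx_comp, p2_pair, rx_comp, cmp_top, top_stable, imp_top_l.
    apply le_refl.
  - apply (right_adj_le_iff (Pi_p2_adj _ _ _ (isProj_p2 X A))).
    rewrite rx_imp; apply imp_mono_r.
    apply (proj1 (proj2 (Pi_p2_adj _ _ _ (isProj_p2 X A)))).
Qed.

Lemma implicational_of_mp (HPi : Pi_doctrine Pi) : implicational Pi (comp_imp K Pi).
Proof.
  split; [exact rx_imp |].
  split; [exact (Pi_p2_imp HPi) |].
  split; [intros; apply le_imp |].
  split; [exact imp_distr |].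
  split; [exact mp | intros; apply le_imp_of_le; assumption].
Qed.

End Stability.

End Implication.

End Comprehension.

Theorem mainTheorem3 :
  (forall (C : CartCat) (P : Doctrine C) (K : Comprehension P) (Pi : PiOp P),
     (forall A (a : Pr P A), is_right_adj (cmp K a) (Pi _ _ (cmp K a))) ->
     imp_cond_c (comp_imp K Pi) ->
     full_comprehension K)
  /\
  (forall (C : CartCat) (P : Doctrine C) (K : Comprehension P) (Pi : PiOp P),
     Pi_doctrine Pi ->
     restricted_Pi_CP_doctrine K Pi ->
     (implicational Pi (comp_imp K Pi) <-> full_comprehension K)).
Proof.
  split.
  - intros C P K Pi Pi_cmp_adj; apply (imp_cond_c_iff_full Pi_cmp_adj).
  - intros C P K Pi HPi [Pi_CP_adj Pi_CP_BC].
    assert (Pi_cmp_adj : forall A (a : Pr P A), is_right_adj (cmp K a) (Pi _ _ (cmp K a)))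
      by (intros; apply Pi_CP_adj, isCP_cmp).
    destruct (imp_cond_c_iff_full Pi_cmp_adj) as [full_of_mp mp_of_full]; split.
    + intros (_ & _ & _ & _ & mp & _); exact (full_of_mp mp).
    + intro Hfull.
      exact (implicational_of_mp Pi_cmp_adj Pi_CP_BC (mp_of_full Hfull) HPi).
Qed.
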